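(* Let $n\ge2$, $F(a)=\prod_{i=1}^n(a-a_i)$ with distinct real $a_i$, and consider, for $0<a<a_1$, the superintegrable systems (integrals of degree $2n+1$) of the construction below with $\nu_n=1$: $\mathcal{I}_{-+}$: $x(a)=\frac a2-\frac1{\sqrt{a_1-a}}-\sum_{i=2}^n\frac{\xi_i}{\sqrt{a_i-a}}$, so that with $u=\sqrt a\in(0,\sqrt{a_1})$, $g=(\mu^2du^2+dy^2)/u^2$, $\mu=1-\frac1{(a_1-u^2)^{3/2}}-\sum_{i=2}^n\frac{\xi_i}{(a_i-u^2)^{3/2}}$; $\mathcal{I}_{--}$: $x(a)=\frac a2+\frac1{\sqrt{a_1-a}}+\sum_{i=2}^n\frac{\xi_i}{\sqrt{a_i-a}}$, so that $\mu=1+\frac1{(a_1-u^2)^{3/2}}+\sum_{i=2}^n\frac{\xi_i}{(a_i-u^2)^{3/2}}$. These systems (generalizing the cubic cases $\mathcal{I}_{-\pm}$ with $F=a-a_1$) are globally defined on $M\cong\mathbb{H}^2$ under the restrictions $\mathcal{I}_{-+}$: $0<a_1<1$, $a_i>1$ ($i\ge2$), $\xi_i>0$, and $\frac1{|a_1|^{3/2}}+\sum_{i=2}^n\frac{\xi_i}{|a_i|^{3/2}}>1$; $\mathcal{I}_{--}$: $0<a_1<1$, $a_i>1$ ($i\ge2$), $\xi_i>0$.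
   Context: Construction (odd degree $2n+1$): $F=\sum_kA_ka^k=\prod_i(a-a_i)$, signs $\epsilon_i$ (here all $\epsilon_i=-1$), $\Delta_i=\epsilon_i(a-a_i)$, $x=\frac{\nu_n}2a+\sum_i\xi'_i\Delta_i^{-1/2}$ (coefficients $\xi'_i$ read off from the displayed $x$); $H=\Pi^2+aP_y^2$, $\Pi=\frac a{\dot x}P_a$ (geodesic Hamiltonian of $g=\dot x^2a^{-2}da^2+a^{-1}dy^2$, $y\in\mathbb{R}$); $G=\sum_{k=0}^nA_{n-k}H^{n-k}P_y^{2k+1}$, $Q_1=\sum_{k=0}^n\tilde b_kH^{n-k}\Pi P_y^{2k}$, $Q_2=\sum_{k=0}^n\tilde c_kH^{n-k}P_y^{2k+1}$, $S_1=Q_1+yG$, $S_2=Q_2+yQ_1+\frac{y^2}2G$, with $\tilde b_k=(-1)^k(\nu_n\sigma_k+\sum_i\frac{\xi'_i}{\sqrt{\Delta_i}}\sigma^i_{k-1})$, $\tilde c_k=\frac{(-1)^{k+1}}2\{\nu_n^2a\sigma_k+2\nu_n\sum_i\frac{\xi'_i}{\sqrt{\Delta_i}}(\sigma^i_k+a\sigma^i_{k-1})+\sum_i\frac{\xi_i'^2}{\Delta_i}\sigma^i_{k-1}+\sum_{i\neq j}\frac{\xi'_i\xi'_j}{\sqrt{\Delta_i\Delta_j}}(\sigma^{ij}_{k-1}+a\sigma^{ij}_{k-2})\}$; $\sigma_k$ by $\prod_i(a-a_i)=\sum_k(-1)^k\sigma_ka^{n-k}$, $\sigma^i_m$ by $\prod_{l\ne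 i}(a-a_l)=\sum_{m=0}^{n-1}(-1)^m\sigma^i_ma^{n-1-m}$, $\sigma^i_{-1}=\sigma^i_n=0$, $\sigma^{ij}_m$ by $\prod_{l\ne i,j}(a-a_l)=\sum_{m=0}^{n-2}(-1)^m\sigma^{ij}_ma^{n-2-m}$, $\sigma^{ij}_{-2}=\sigma^{ij}_{-1}=\sigma^{ij}_{n-1}=\sigma^{ij}_n=0$. ''Globally defined on $M\cong\mathbb{H}^2$'': $g$ is a smooth Riemannian metric on the whole domain $M=(0,\sqrt{a_1})_u\times\mathbb{R}_y$, there is a smooth diffeomorphism $t=t(u)$ of $(0,\sqrt{a_1})$ onto $(0,\infty)$ or $(-\infty,0)$ with $g=\Phi(dt^2+dy^2)/t^2$, $\Phi$ smooth positive, and $S_1,S_2$ are smooth on $T^*M$. *)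

From HB Require Import structures.
From mathcomp Require Import all_boot all_order all_algebra.
From mathcomp Require Import all_classical all_reals all_analysis.
Set Implicit Arguments. Unset Strict Implicit. Unset Printing Implicit Defensive.
Import Order.TTheory GRing.Theory Num.Theory.
Import numFieldNormedType.Exports.
Local Open Scope classical_set_scope.
Local Open Scope ring_scope.

Fixpoint iter_dir {R : realType} {V : normedModType R} (vs : seq V) (f : V -> R)
  : V -> R :=
  match vs with
  | [::] => f
  | v :: vs' => fun x => derive (iter_dir vs' f) x v
  end.

Definition smooth_on {R : realType} {V : normedModType R} (U : set V) (f : V -> R) :=
  forall vs : seq V, forall x, U x ->
    (forall v : V, derivable (iter_dir vs f) x v) /\ {for x, continuous (iter_dir vs f)}.

(* roots a_1,...,a_n are a 1, ..., a n (indices 1..n); [excl] removes indices *)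
Definition roots_excl {R : realType} (n : nat) (a : nat -> R) (excl : seq nat) : seq R :=
  [seq a l | l <- iota 1 n & l \notin excl].

(* sigma_m of a family s: prod_{r in s} (X - r) = sum_m (-1)^m sigma_m X^{|s|-m},
   and sigma_m := 0 for m < 0 or m > |s|. *)
Definition sig {R : realType} (s : seq R) (m : int) : R :=
  match m with
  | Posz k => if (k <= size s)%N
              then (-1) ^+ k * (\prod_(r <- s) ('X - r%:P))`_(size s - k)
              else 0
  | Negz _ => 0
  end.

Definition Fpoly {R : realType} (n : nat) (a : nat -> R) : {poly R} :=
  \prod_(1 <= i < n.+1) ('X - (a i)%:P).
Definition Acoef {R : realType} (n : nat) (a : nat -> R) (k : nat) : R :=
  (Fpoly n a)`_k.

Section Construction.
Variables (R : realType) (n : nat) (a : nat -> R) (eps : nat -> R)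
          (nu : R) (xi' : nat -> R).

Definition Delta (i : nat) (s : R) : R := eps i * (s - a i).

Definition xfun (s : R) : R :=
  nu / 2 * s + \sum_(1 <= i < n.+1) xi' i / Num.sqrt (Delta i s).

Definition xdot (s : R) : R := derive1 xfun s.

Definition sigma (k : int) : R := sig (roots_excl n a [::]) k.
Definition sigma1 (i : nat) (m : int) : R := sig (roots_excl n a [:: i]) m.
Definition sigma2 (i j : nat) (m : int) : R := sig (roots_excl n a [:: i; j]) m.

Definition btil (k : nat) (s : R) : R :=
  (-1) ^+ k * (nu * sigma k
     + \sum_(1 <= i < n.+1) xi' i / Num.sqrt (Delta i s) * sigma1 i (k%:Z - 1)).

Definition ctil (k : nat) (s : R) : R :=
  (-1) ^+ k.+1 / 2 *
   (nu ^+ 2 * s * sigma k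
    + 2 * nu * (\sum_(1 <= i < n.+1)
                  xi' i / Num.sqrt (Delta i s) * (sigma1 i k + s * sigma1 i (k%:Z - 1)))
    + (\sum_(1 <= i < n.+1) xi' i ^+ 2 / Delta i s * sigma1 i (k%:Z - 1))
    + (\sum_(1 <= i < n.+1) \sum_(1 <= j < n.+1 | j != i)
          xi' i * xi' j / Num.sqrt (Delta i s * Delta j s)
          * (sigma2 i j (k%:Z - 1) + s * sigma2 i j (k%:Z - 2)))).

(* Phase space T^*M in canonical coordinates z = ((u, y), (p_u, p_y)) of the
   chart (u, y), u = sqrt a.  Point transformation a = u^2 gives
   P_a = p_u / (2 u). *)
Definition a_of (z : (R * R) * (R * R)) : R := z.1.1 ^+ 2.
Definition y_of (z : (R * R) * (R * R)) : R := z.1.2.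
Definition Pa_of (z : (R * R) * (R * R)) : R := z.2.1 / (2 * z.1.1).
Definition Py_of (z : (R * R) * (R * R)) : R := z.2.2.

Definition PiF (z : (R * R) * (R * R)) : R := a_of z / xdot (a_of z) * Pa_of z.
Definition HF (z : (R * R) * (R * R)) : R := PiF z ^+ 2 + a_of z * Py_of z ^+ 2.

Definition GF (z : (R * R) * (R * R)) : R :=
  \sum_(0 <= k < n.+1) Acoef n a (n - k) * HF z ^+ (n - k) * Py_of z ^+ (2 * k).+1.
Definition Q1F (z : (R * R) * (R * R)) : R :=
  \sum_(0 <= k < n.+1) btil k (a_of z) * HF z ^+ (n - k) * PiF z * Py_of z ^+ (2 * k).
Definition Q2F (z : (R * R) * (R * R)) : R :=
  \sum_(0 <= k < n.+1) ctil k (a_of z) * HF z ^+ (n - k) * Py_of z ^+ (2 * k).+1.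

Definition S1F (z : (R * R) * (R * R)) : R := Q1F z + y_of z * GF z.
Definition S2F (z : (R * R) * (R * R)) : R :=
  Q2F z + y_of z * Q1F z + y_of z ^+ 2 / 2 * GF z.

(* Metric g = xdot^2 a^{-2} da^2 + a^{-1} dy^2 written in the chart (u, y),
   a = u^2, da = 2u du: components g_uu, g_uy, g_yy. *)
Definition g_uu (p : R * R) : R :=
  xdot (p.1 ^+ 2) ^+ 2 / (p.1 ^+ 2) ^+ 2 * (2 * p.1) ^+ 2.
Definition g_uy (p : R * R) : R := 0.
Definition g_yy (p : R * R) : R := (p.1 ^+ 2)^-1.

Definition Mset : set (R * R) := [set p | 0 < p.1 < Num.sqrt (a 1)].
Definition TMset : set ((R * R) * (R * R)) := [set z | Mset z.1].

Definition globally_defined : Prop :=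
  (smooth_on Mset g_uu /\ smooth_on Mset g_uy /\ smooth_on Mset g_yy /\
   (forall p, Mset p -> 0 < g_uu p /\ 0 < g_uu p * g_yy p - g_uy p ^+ 2)) /\
  (* a diffeomorphism t(u) of (0, sqrt a_1) onto (0,oo) or (-oo,0), and a
     smooth positive Phi on M with g = Phi (dt^2 + dy^2) / t^2 *)
  (exists (J : set R) (t tinv : R -> R) (Phi : R * R -> R),
      (J = [set s | 0 < s] \/ J = [set s | s < 0]) /\
      smooth_on [set u | 0 < u < Num.sqrt (a 1)] t /\
      smooth_on J tinv /\
      (forall u, 0 < u < Num.sqrt (a 1) -> J (t u) /\ tinv (t u) = u) /\
      (forall s, J s -> 0 < tinv s < Num.sqrt (a 1) /\ t (tinv s) = s) /\
      smooth_on Mset Phi /\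
      (forall p, Mset p -> 0 < Phi p) /\
      (forall p, Mset p ->
         g_uu p = Phi p * (derive1 t p.1) ^+ 2 / (t p.1) ^+ 2 /\
         g_uy p = Phi p * 0 / (t p.1) ^+ 2 /\
         g_yy p = Phi p * 1 / (t p.1) ^+ 2)) /\
  smooth_on TMset S1F /\ smooth_on TMset S2F.

End Construction.

Definition pow32 {R : realType} (x : R) : R := x * Num.sqrt x.

Definition xi_mp {R : realType} (xi : nat -> R) (i : nat) : R :=
  if i == 1%N then -1 else - xi i.
Definition xi_mm {R : realType} (xi : nat -> R) (i : nat) : R :=
  if i == 1%N then 1 else xi i.

From Pilot Require Import Defs.
From HB Require Import structures.
From mathcomp Require Import all_boot all_order all_algebra.
From mathcomp Require Import all_classical all_reals all_analysis.
From mathcomp Require Import ring lra.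
Set Implicit Arguments. Unset Strict Implicit. Unset Printing Implicit Defensive.
Import Order.TTheory GRing.Theory Num.Theory.
Import numFieldNormedType.Exports.
Local Open Scope classical_set_scope.
Local Open Scope ring_scope.

(* Put u = sqrt a.  Then xdot(u^2) = mu(u)/2 with mu(u) = 1 + sum_i xi'_i (a_i - u^2)^(-3/2),
   so g = (mu^2 du^2 + dy^2)/u^2.  The coordinate t(u) = u + sum_i xi'_i u/(a_i sqrt(a_i - u^2))
   has t' = mu, hence g = Phi (dt^2 + dy^2)/t^2 with Phi = t^2/u^2.  Writing the xi'_i with a
   common sign s (s = 1 for I_{--}, s = -1 for I_{-+}), s mu is bounded below on (0, sqrt a_1) by
   s + |a_1|^(-3/2) + sum_{i>=2} xi_i |a_i|^(-3/2) > 0, and s t blows up at sqrt a_1 because of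
   the i = 1 term, so t is a diffeomorphism onto a half-line.
   Smoothness is uniform: a function built from coordinates by field operations and square roots
   of positive functions has directional derivatives of the same kind, hence is C^oo.  This covers
   g, Phi, t, S_1, S_2, and also t^-1, whose derivative 1/mu(t^-1) is of that kind in t^-1. *)

Section DirectionalDerivative.
Context {R : realType} {V : normedModType R}.

Lemma near_eq_open (U : set V) (f g : V -> R) x : open U -> U x ->
  (forall y, U y -> f y = g y) -> \forall y \near x, f y = g y.
Proof.
move=> Uo Ux fg.
have : \forall y \near x, U y by apply: open_nbhs_nbhs; split.
by apply: filterS => y /fg.
Qed.

Lemma near_eq_continuous (f g : V -> R) x : (\forall y \near x, f y = g y) ->
  {for x, continuous f} -> {for x, continuous g}.
Proof.
move=> fg cf.
have gx : g x = f x by rewrite (nbhs_singleton fg).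
rewrite /prop_for /continuous_at gx.
by apply: cvg_trans cf; apply: near_eq_cvg; apply: filterS fg => y ->.
Qed.

Lemma is_derive_comp_scalar (phi : R -> R) (f : V -> R) x v df dphi :
  is_derive x v f df -> is_derive (f x) 1 phi dphi ->
  is_derive x v (phi \o f) (dphi * df).
Proof.
move=> [df_ex <-] dphi_f.
have line (g : V -> R) : (derivable g x v <-> derivable (fun h : R => g (h *: v + x)) 0 1)
    /\ 'D_v g x = 'D_1 (fun h : R => g (h *: v + x)) 0.
  rewrite /derivable /derive.
  suff -> : (fun h : R => h^-1 *: ((g \o shift x) (h *: v) - g x)) =
      (fun h : R => h^-1 *: (((fun h : R => g (h *: v + x)) \o shift 0) (h *: 1)
                            - g (0 *: v + x))) by [].
  by apply/funext => h /=; rewrite scale0r add0r addr0 /GRing.scale /= mulr1.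
have [fL fE] := line f; have [gL gE] := line (phi \o f).
have dphi_f0 : is_derive ((fun h : R => f (h *: v + x)) 0) 1 phi dphi.
  by rewrite /= scale0r add0r.
have [chain_ex chain_val] := is_derive1_comp dphi_f0 (derivableP (proj1 fL df_ex)).
by split; [apply/gL | rewrite gE fE -chain_val].
Qed.

End DirectionalDerivative.

Section RadicalExpressions.
Context {R : realType} {V : normedModType R} (U : set V) (A : (V -> R) -> Prop).

Inductive radical_expr : (V -> R) -> Prop :=
| RadAtom f : A f -> radical_expr f
| RadCst c : radical_expr (fun _ => c)
| RadD f g : radical_expr f -> radical_expr g -> radical_expr (fun x => f x + g x)
| RadM f g : radical_expr f -> radical_expr g -> radical_expr (fun x => f x * g x)
| RadV f : radical_expr f -> (forall x, U x -> f x != 0) ->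
    radical_expr (fun x => (f x)^-1)
| RadSqrt f : radical_expr f -> (forall x, U x -> 0 < f x) ->
    radical_expr (fun x => Num.sqrt (f x))
| RadEq f g : radical_expr f -> (forall x, U x -> f x = g x) -> radical_expr g.

Lemma rad_opp f : radical_expr f -> radical_expr (fun x => - f x).
Proof. by move=> rf; apply: RadEq (RadM (RadCst (-1)) rf) _ => x _; rewrite mulN1r. Qed.

Lemma rad_sub f g : radical_expr f -> radical_expr g -> radical_expr (fun x => f x - g x).
Proof. by move=> rf rg; apply: RadD => //; apply: rad_opp. Qed.

Lemma rad_exp f m : radical_expr f -> radical_expr (fun x => f x ^+ m).
Proof.
move=> rf; elim: m => [|m IHm].
  by apply: RadEq (RadCst 1) _ => x _; rewrite expr0.
by apply: RadEq (RadM rf IHm) _ => x _; rewrite exprS.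
Qed.

Lemma rad_div f g : radical_expr f -> radical_expr g -> (forall x, U x -> g x != 0) ->
  radical_expr (fun x => f x / g x).
Proof. by move=> rf rg g_neq0; apply: RadM => //; apply: RadV. Qed.

Lemma rad_sum (I : eqType) (r : seq I) (P : pred I) (F : I -> V -> R) :
  (forall i, i \in r -> P i -> radical_expr (F i)) ->
  radical_expr (fun x => \sum_(i <- r | P i) F i x).
Proof.
elim: r => [|i r IHr] rF.
  by apply: RadEq (RadCst 0) _ => x _; rewrite big_nil.
have rS : radical_expr (fun x => \sum_(j <- r | P j) F j x).
  by apply: IHr => j jr; apply: rF; rewrite inE jr orbT.
case Pi: (P i).
  by apply: RadEq (RadD (rF i (mem_head _ _) Pi) rS) _ => x _; rewrite big_cons Pi.
by apply: RadEq rS _ => x _; rewrite big_cons Pi.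
Qed.

Hypothesis U_open : open U.
Hypothesis atom_regular : forall f, A f -> forall x, U x ->
  {for x, continuous f} /\ forall v, derivable f x v.
Hypothesis atom_derive : forall f, A f -> forall v,
  exists2 h, radical_expr h & forall x, U x -> 'D_v f x = h x.

Lemma radical_regular f : radical_expr f -> forall x, U x ->
  {for x, continuous f} /\ forall v, derivable f x v.
Proof.
elim=> {f} [f /atom_regular //|c x _|f g _ IHf _ IHg x Ux|f g _ IHf _ IHg x Ux
  |f _ IHf f_neq0 x Ux|f _ IHf f_gt0 x Ux|f g _ IHf fg x Ux].
- by split=> [|v]; [exact: cvg_cst | exact: derivable_cst].
- have [cf df] := IHf x Ux; have [cg dg] := IHg x Ux.
  by split=> [|v]; [exact: cvgD | exact: derivableD].
- have [cf df] := IHf x Ux; have [cg dg] := IHg x Ux.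
  by split=> [|v]; [exact: cvgM | exact: derivableM].
- have [cf df] := IHf x Ux.
  by split=> [|v]; [exact: cvgV (f_neq0 x Ux) cf | exact: derivableV (f_neq0 x Ux) (df v)].
- have [cf df] := IHf x Ux.
  split=> [|v]; first exact: continuous_comp cf (@sqrt_continuous R (f x)).
  by case: (is_derive_comp_scalar (derivableP (df v)) (is_derive1_sqrt (f_gt0 x Ux))).
- have [cf df] := IHf x Ux; have fg_near := near_eq_open U_open Ux fg.
  split=> [|v]; first exact: near_eq_continuous fg_near cf.
  by apply: near_eq_derivable (df v); apply: filterS fg_near.
Qed.

Lemma radical_derive f : radical_expr f -> forall v,
  exists2 h, radical_expr h & forall x, U x -> 'D_v f x = h x.
Proof.
move=> rf; elim: rf => {f} [f /atom_derive //|c v|f g rf IHf rg IHg v|f g rf IHf rg IHg v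
  |f rf IHf f_neq0 v|f rf IHf f_gt0 v|f g rf IHf fg v].
- by exists (fun _ => 0) => [|x _]; [exact: RadCst | exact: derive_cst].
- have [hf rhf Ef] := IHf v; have [hg rhg Eg] := IHg v.
  exists (fun x => hf x + hg x) => [|x Ux]; first exact: RadD.
  have [_ df] := radical_regular rf Ux; have [_ dg] := radical_regular rg Ux.
  by rewrite deriveD ?Ef ?Eg.
- have [hf rhf Ef] := IHf v; have [hg rhg Eg] := IHg v.
  exists (fun x => f x * hg x + g x * hf x) => [|x Ux]; first by apply: RadD; apply: RadM.
  have [_ df] := radical_regular rf Ux; have [_ dg] := radical_regular rg Ux.
  by rewrite deriveM ?Ef ?Eg.
- have [hf rhf Ef] := IHf v.
  exists (fun x => (-1) * ((f x)^-1 * (f x)^-1) * hf x) => [|x Ux].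
    by apply: RadM => //; apply: RadM; [exact: RadCst | apply: RadM; apply: RadV].
  have [_ df] := radical_regular rf Ux.
  by rewrite (deriveV (f_neq0 x Ux) (df v)) Ef // mulN1r -invfM -expr2.
- have [hf rhf Ef] := IHf v.
  exists (fun x => (2 * Num.sqrt (f x))^-1 * hf x) => [|x Ux].
    apply: RadM => //; apply: RadV; first by apply: RadM; [exact: RadCst | exact: RadSqrt].
    by move=> x Ux; rewrite mulf_neq0 // gt_eqF // sqrtr_gt0 f_gt0.
  have [_ df] := radical_regular rf Ux.
  have [_ ->] := is_derive_comp_scalar (derivableP (df v)) (is_derive1_sqrt (f_gt0 x Ux)).
  by rewrite Ef.
- have [hf rhf Ef] := IHf v.
  exists hf => // x Ux; rewrite -Ef //; apply: near_eq_derive.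
  by apply: filterS (near_eq_open U_open Ux fg) => y ->.
Qed.

Lemma radical_iter_dir f : radical_expr f -> forall vs,
  exists2 h, radical_expr h & forall x, U x -> iter_dir vs f x = h x.
Proof.
move=> rf; elim=> [|v vs [h rh Eh]]; first by exists f.
have [h' rh' Eh'] := radical_derive rh v.
exists h' => // x Ux /=; rewrite -Eh' //; apply: near_eq_derive.
exact: near_eq_open U_open Ux Eh.
Qed.

Theorem radical_smooth f : radical_expr f -> smooth_on U f.
Proof.
move=> rf vs x Ux; have [h rh Eh] := radical_iter_dir rf vs.
have [ch dh] := radical_regular rh Ux.
have h_near : \forall y \near x, h y = iter_dir vs f y.
  by apply: near_eq_open U_open Ux _ => y Uy; rewrite Eh.
split=> [v|]; last exact: near_eq_continuous h_near ch.
by apply: near_eq_derivable (dh v); apply: filterS h_near.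
Qed.

End RadicalExpressions.

Section ContinuousLinear.
Context {R : realType}.

Definition continuous_linear {V : normedModType R} (f : V -> R) :=
  (forall (h : R) v x, f (h *: v + x) = h * f v + f x) /\ continuous f.

Lemma is_derive_continuous_linear {V : normedModType R} (f : V -> R) x v :
  continuous_linear f -> is_derive x v f (f v).
Proof.
move=> [f_lin _].
have E : \forall h \near 0^', h^-1 *: ((f \o shift x) (h *: v) - f x) = f v.
  apply: filterS (nbhs_dnbhs_neq (0 : R)) => h h_neq0.
  by rewrite /= f_lin addrK /GRing.scale /= mulrA mulVf // mul1r.
by split; [exact: is_cvg_near_cst E | exact: lim_near_cst].
Qed.

Lemma continuous_linear_smooth {V : normedModType R} (U : set V) f :
  open U -> radical_expr U continuous_linear f -> smooth_on U f.
Proof.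
move=> U_open; apply: radical_smooth => // g g_lin.
  by move=> x _; split=> [|v]; [exact: g_lin.2 | case: (is_derive_continuous_linear x v g_lin)].
move=> v; exists (fun _ => g v) => [|x _]; first exact: RadCst.
by case: (is_derive_continuous_linear x v g_lin).
Qed.

Lemma continuous_linear_id : continuous_linear (fun u : R => u).
Proof. by split=> // h v x; rewrite /GRing.scale. Qed.

Lemma continuous_linear_fst {V W : normedModType R} (f : V -> R) :
  continuous_linear f -> continuous_linear (fun z : V * W => f z.1).
Proof.
move=> [f_lin f_cont]; split=> [h v x|z]; first exact: f_lin.
by apply: (@continuous_comp _ _ _ fst f); [exact: cvg_fst | exact: f_cont].
Qed.

Lemma continuous_linear_snd {V W : normedModType R} (f : W -> R) :
  continuous_linear f -> continuous_linear (fun z : V * W => f z.2).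
Proof.
move=> [f_lin f_cont]; split=> [h v x|z]; first exact: f_lin.
by apply: (@continuous_comp _ _ _ snd f); [exact: cvg_snd | exact: f_cont].
Qed.

End ContinuousLinear.

Lemma is_derive_sum_seq {R : realType} {V W : normedModType R} (I : eqType) (r : seq I)
    (F : I -> V -> W) (dF : I -> W) x v :
  (forall i, i \in r -> is_derive x v (F i) (dF i)) ->
  is_derive x v (fun y => \sum_(i <- r) F i y) (\sum_(i <- r) dF i).
Proof.
elim: r => [|i r IHr] dFi.
  under eq_fun do rewrite big_nil.
  by rewrite big_nil; exact: is_derive_cst.
under eq_fun do rewrite big_cons.
rewrite big_cons; apply: is_deriveD; first exact: dFi (mem_head _ _).
by apply: IHr => j jr; apply: dFi; rewrite inE jr orbT.
Qed.

Section OneVariable.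
Context {R : realType}.

Lemma is_derive_sqrt_sub_sq (c u : R) : u ^+ 2 < c ->
  is_derive u 1 (fun u => Num.sqrt (c - u ^+ 2)) (- u / Num.sqrt (c - u ^+ 2)).
Proof.
move=> u2_lt; have D_gt0 : 0 < c - u ^+ 2 by rewrite subr_gt0.
have dD : is_derive u 1 (fun u => c - u ^+ 2) (- (2 * u)).
  by apply: is_derive_eq; rewrite /GRing.scale /=; ring.
apply: is_derive_eq; first exact: is_derive_comp_scalar dD (is_derive1_sqrt D_gt0).
have q_neq0 : Num.sqrt (c - u ^+ 2) != 0 by rewrite gt_eqF // sqrtr_gt0.
by field.
Qed.

Lemma is_derive_inv_sqrt_sub (c s : R) : s < c ->
  is_derive s 1 (fun s => (Num.sqrt (c - s))^-1) ((2 * pow32 (c - s))^-1).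
Proof.
move=> s_lt; have D_gt0 : 0 < c - s by rewrite subr_gt0.
have q_gt0 : 0 < Num.sqrt (c - s) by rewrite sqrtr_gt0.
have dD : is_derive s 1 (fun s => c - s) (-1).
  by apply: is_derive_eq; rewrite /GRing.scale /=; ring.
apply: is_derive_eq.
  apply: is_deriveV; first by rewrite gt_eqF.
  exact: is_derive_comp_scalar dD (is_derive1_sqrt D_gt0).
rewrite /pow32 -[in X in _ = (2 * (X * _))^-1](sqr_sqrtr (ltW D_gt0)).
by rewrite /GRing.scale /=; field; rewrite gt_eqF.
Qed.

Lemma is_derive_tcoord_term (c u : R) : u ^+ 2 < c ->
  is_derive u 1 (fun u => u / (c * Num.sqrt (c - u ^+ 2))) ((pow32 (c - u ^+ 2))^-1).
Proof.
move=> u2_lt; have D_gt0 : 0 < c - u ^+ 2 by rewrite subr_gt0.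
have c_gt0 : 0 < c by apply: le_lt_trans u2_lt; exact: sqr_ge0.
have q_gt0 : 0 < Num.sqrt (c - u ^+ 2) by rewrite sqrtr_gt0.
apply: is_derive_eq.
  apply: is_deriveM; apply: is_deriveV; first by rewrite mulf_neq0 // gt_eqF.
  by apply: is_deriveM; exact: is_derive_sqrt_sub_sq.
have q2 := sqr_sqrtr (ltW D_gt0).
move: q2 q_gt0; rewrite /pow32; set q := Num.sqrt _ => q2 q_gt0.
have c_eq : c = q ^+ 2 + u ^+ 2 by rewrite q2; ring.
rewrite -q2 /GRing.scale /= [in LHS]c_eq.
by field; rewrite -c_eq !gt_eqF.
Qed.

End OneVariable.

Section TCoordinate.
Context {R : realType} (n : nat) (a xi' : nat -> R).

Local Notation xdot := (xdot n a (fun=> -1) 1 xi').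

Definition gap (i : nat) (u : R) : R := a i - u ^+ 2.

Definition mu (u : R) : R := 1 + \sum_(1 <= i < n.+1) xi' i / pow32 (gap i u).

Definition tcoord (u : R) : R :=
  u + \sum_(1 <= i < n.+1) xi' i * (u / (a i * Num.sqrt (gap i u))).

Lemma Delta_sq i u : Delta a (fun=> -1) i (u ^+ 2) = gap i u.
Proof. by rewrite /Delta /gap; ring. Qed.

Lemma tcoord0 : tcoord 0 = 0.
Proof. by rewrite /tcoord add0r big1 // => i _; rewrite !mul0r mulr0. Qed.

Lemma mem_index_iota1 i : i \in index_iota 1 n.+1 -> (1 <= i <= n)%N.
Proof. by rewrite mem_index_iota ltnS. Qed.

Hypothesis a1_min : forall i, (1 <= i <= n)%N -> a 1%N <= a i.

Lemma gap_gt0 i u : (1 <= i <= n)%N -> u ^+ 2 < a 1%N -> 0 < gap i u.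
Proof. by move=> Hi u2_lt; rewrite subr_gt0 (lt_le_trans u2_lt) ?a1_min. Qed.

Lemma xdot_sq u : u ^+ 2 < a 1%N -> xdot (u ^+ 2) = mu u / 2.
Proof.
move=> u2_lt; rewrite /xdot /xfun derive1E; apply: derive_val.
under eq_fun do under eq_bigr do rewrite /Delta mulN1r opprB.
apply: is_derive_eq.
  apply: is_deriveD; apply: is_derive_sum_seq => i /mem_index_iota1 Hi.
  apply: is_deriveM; apply: is_derive_inv_sqrt_sub.
  by rewrite -subr_gt0 (gap_gt0 Hi u2_lt).
rewrite /mu /gap /GRing.scale /= mulr1 mulrDl mul1r big_distrl /=.
by congr (_ + _); apply: eq_bigr => i _; rewrite mulr0 addr0 invfM [2^-1 * _]mulrC mulrA.
Qed.

Lemma is_derive_tcoord u : u ^+ 2 < a 1%N -> is_derive u 1 tcoord (mu u).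
Proof.
move=> u2_lt; apply: is_derive_eq.
  apply: is_deriveD; apply: is_derive_sum_seq => i /mem_index_iota1 Hi.
  apply: is_deriveM; apply: is_derive_tcoord_term.
  by rewrite -subr_gt0 (gap_gt0 Hi u2_lt).
rewrite /mu /gap /GRing.scale /=.
by congr (_ + _); apply: eq_bigr => i _; rewrite mulr0 addr0.
Qed.

End TCoordinate.

Section RadicalTCoordinate.
Context {R : realType} (n : nat) (a xi' : nat -> R) {V : normedModType R}.
Context (U : set V) (A : (V -> R) -> Prop) (w : V -> R).
Hypothesis a1_min : forall i, (1 <= i <= n)%N -> a 1%N <= a i.
Hypothesis rad_w : radical_expr U A w.
Hypothesis w_lt : forall x, U x -> w x ^+ 2 < a 1%N.

Local Notation radical := (radical_expr U A).

Lemma gap_w_gt0 i x : (1 <= i <= n)%N -> U x -> 0 < gap a i (w x).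
Proof. by move=> Hi Ux; apply: gap_gt0 Hi (w_lt Ux). Qed.

Lemma rad_gap i : radical (fun x => gap a i (w x)).
Proof. by apply: rad_sub; [exact: RadCst | exact: rad_exp]. Qed.

Lemma rad_sqrt_gap i : (1 <= i <= n)%N -> radical (fun x => Num.sqrt (gap a i (w x))).
Proof. by move=> Hi; apply: RadSqrt; [exact: rad_gap | move=> x; exact: gap_w_gt0]. Qed.

Lemma rad_mu : radical (fun x => mu n a xi' (w x)).
Proof.
apply: RadD; first exact: RadCst.
apply: rad_sum => i /mem_index_iota1 Hi _.
apply: rad_div; first exact: RadCst.
  by apply: RadM; [exact: rad_gap | exact: rad_sqrt_gap].
by move=> x Ux; rewrite mulf_neq0 // gt_eqF // ?sqrtr_gt0 gap_w_gt0.
Qed.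

Lemma rad_tcoord : radical (fun x => tcoord n a xi' (w x)).
Proof.
apply: RadD => //; apply: rad_sum => i /mem_index_iota1 Hi _.
apply: RadM; first exact: RadCst.
apply: rad_div => //; first by apply: RadM; [exact: RadCst | exact: rad_sqrt_gap].
move=> x Ux; rewrite mulf_neq0 // gt_eqF // ?sqrtr_gt0 ?gap_w_gt0 //.
by apply: lt_le_trans (gap_w_gt0 Hi Ux) _; rewrite gerDl oppr_le0 sqr_ge0.
Qed.

Lemma rad_xdot : radical (fun x => xdot n a (fun=> -1) 1 xi' (w x ^+ 2)).
Proof.
have rad_mu_half : radical (fun x => mu n a xi' (w x) / 2).
  by apply: rad_div; [exact: rad_mu | exact: RadCst | move=> x _; rewrite pnatr_eq0].
by apply: RadEq rad_mu_half _ => x Ux; rewrite xdot_sq ?w_lt.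
Qed.

End RadicalTCoordinate.

Lemma ltr_sqrt_sq {R : rcfType} (u c : R) : 0 < u -> (u < Num.sqrt c) = (u ^+ 2 < c).
Proof.
move=> u_gt0; have [c_gt0|c_le0] := ltP 0 c.
  by rewrite -[u ^+ 2 < c](ltr_sqrt _ c_gt0) sqrtr_sqr gtr0_norm.
rewrite ler0_sqrtr // ltNge (ltW u_gt0); apply/esym/negbTE; rewrite -leNgt.
exact: le_trans c_le0 (sqr_ge0 u).
Qed.

Lemma open_preimage_oo {R : realType} {T : topologicalType} (f : T -> R) (lo hi : R) :
  continuous f -> open [set x | lo < f x < hi].
Proof.
move=> f_cont; have -> : [set x | lo < f x < hi] = f @^-1` `]lo, hi[.
  by apply/seteqP; split=> x /=; rewrite in_itv.
by apply: open_comp; [move=> x _; exact: f_cont | exact: itv_open].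
Qed.

Section PhaseSpace.
Context {R : realType} (n : nat) (a xi' : nat -> R).
Hypothesis a1_min : forall i, (1 <= i <= n)%N -> a 1%N <= a i.
Hypothesis mu_neq0 : forall u, 0 < u -> u ^+ 2 < a 1%N -> mu n a xi' u != 0.

Local Notation T := ((R * R) * (R * R))%type.
Local Notation radical := (radical_expr (TMset a) (@continuous_linear R T)).
Local Notation eps := (fun _ : nat => -1 : R).

Lemma TMset_u z : TMset a z -> 0 < z.1.1 /\ z.1.1 ^+ 2 < a 1%N.
Proof. by case/andP=> z_gt0; rewrite ltr_sqrt_sq. Qed.

Lemma open_TMset : open (TMset a).
Proof.
apply: open_preimage_oo (fun z : T => z.1.1) _ _ _.
by apply: (continuous_linear_fst (continuous_linear_fst continuous_linear_id)).2.
Qed.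

Let rad_u : radical (fun z => z.1.1).
Proof. exact: RadAtom (continuous_linear_fst (continuous_linear_fst continuous_linear_id)). Qed.

Let rad_pu : radical (fun z => z.2.1).
Proof. exact: RadAtom (continuous_linear_snd (continuous_linear_fst continuous_linear_id)). Qed.

Let rad_y : radical (fun z => z.1.2).
Proof. exact: RadAtom (continuous_linear_fst (continuous_linear_snd continuous_linear_id)). Qed.

Let rad_py : radical (fun z => z.2.2).
Proof. exact: RadAtom (continuous_linear_snd (continuous_linear_snd continuous_linear_id)). Qed.

Let u_lt z : TMset a z -> z.1.1 ^+ 2 < a 1%N.
Proof. by case/TMset_u. Qed.

Let Delta_gt0 i z : i \in index_iota 1 n.+1 -> TMset a z -> 0 < Delta a eps i (a_of z).
Proof. by move=> /mem_index_iota1 Hi Tz; rewrite Delta_sq (gap_gt0 a1_min Hi) ?u_lt. Qed.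

Let rad_Delta i : radical (fun z => Delta a eps i (a_of z)).
Proof. by apply: RadEq (rad_gap a rad_u i) _ => z _; rewrite Delta_sq. Qed.

Let rad_xi'_sqrt_Delta i : i \in index_iota 1 n.+1 ->
  radical (fun z => xi' i / Num.sqrt (Delta a eps i (a_of z))).
Proof.
move=> Hi; apply: rad_div; first exact: RadCst.
  by apply: RadSqrt => // z; exact: Delta_gt0.
by move=> z Tz; rewrite gt_eqF // sqrtr_gt0 Delta_gt0.
Qed.

Let rad_Pi : radical (fun z => PiF n a eps 1 xi' z).
Proof.
have xdot_neq0 z : TMset a z -> xdot n a eps 1 xi' (a_of z) != 0.
  by case/TMset_u=> u_gt0 u2_lt; rewrite xdot_sq // mulf_neq0 ?mu_neq0.
have u_neq0 z : TMset a z -> 2 * z.1.1 != 0.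
  by case/TMset_u=> u_gt0 _; rewrite mulf_neq0 // gt_eqF.
apply: RadM; apply: rad_div => //; first exact: rad_exp.
- exact: rad_xdot.
- by apply: RadM => //; exact: RadCst.
Qed.

Let rad_H : radical (fun z => HF n a eps 1 xi' z).
Proof. by apply: RadD; [exact: rad_exp | apply: RadM; [exact: rad_exp | exact: rad_exp]]. Qed.

Let rad_G : radical (fun z => GF n a eps 1 xi' z).
Proof.
apply: rad_sum => k _ _.
by apply: RadM; [apply: RadM; [exact: RadCst | exact: rad_exp] | exact: rad_exp].
Qed.

Let rad_btil k : radical (fun z => btil n a eps 1 xi' k (a_of z)).
Proof.
apply: RadM; first exact: RadCst.
apply: RadD; first exact: RadCst.
by apply: rad_sum => i Hi _; apply: RadM; [exact: rad_xi'_sqrt_Delta | exact: RadCst].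
Qed.

Let rad_ctil k : radical (fun z => ctil n a eps 1 xi' k (a_of z)).
Proof.
have rad_lin (c d : R) : radical (fun z => c + a_of z * d).
  by apply: RadD; [exact: RadCst | apply: RadM; [exact: rad_exp | exact: RadCst]].
apply: RadM; first exact: RadCst.
apply: RadD; [apply: RadD; [apply: RadD|] |].
- by apply: RadM; [apply: RadM; [exact: RadCst | exact: rad_exp] | exact: RadCst].
- apply: RadM; first exact: RadCst.
  by apply: rad_sum => i Hi _; apply: RadM; [exact: rad_xi'_sqrt_Delta | exact: rad_lin].
- apply: rad_sum => i Hi _; apply: RadM; last exact: RadCst.
  apply: rad_div; [exact: RadCst | exact: rad_Delta |].
  by move=> z Tz; rewrite gt_eqF // Delta_gt0.
apply: rad_sum => i Hi _; apply: rad_sum => j Hj _.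
apply: RadM; last exact: rad_lin.
have DD_gt0 z : TMset a z -> 0 < Delta a eps i (a_of z) * Delta a eps j (a_of z).
  by move=> Tz; rewrite mulr_gt0 ?Delta_gt0.
apply: rad_div; first exact: RadCst.
  by apply: RadSqrt => //; apply: RadM; exact: rad_Delta.
by move=> z Tz; rewrite gt_eqF // sqrtr_gt0 DD_gt0.
Qed.

Let rad_Q1 : radical (fun z => Q1F n a eps 1 xi' z).
Proof.
apply: rad_sum => k _ _; apply: RadM; last exact: rad_exp.
by apply: RadM => //; apply: RadM => //; exact: rad_exp.
Qed.

Let rad_Q2 : radical (fun z => Q2F n a eps 1 xi' z).
Proof.
apply: rad_sum => k _ _; apply: RadM; last exact: rad_exp.
by apply: RadM => //; exact: rad_exp.
Qed.

Lemma rad_S1 : radical (fun z => S1F n a eps 1 xi' z).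
Proof. by apply: RadD => //; apply: RadM. Qed.

Lemma rad_S2 : radical (fun z => S2F n a eps 1 xi' z).
Proof.
apply: RadD; first by apply: RadD => //; apply: RadM.
by apply: RadM => //; apply: RadM; [exact: rad_exp | exact: RadCst].
Qed.

End PhaseSpace.

Section TCoordinateDiffeo.
Context {R : realType} (n : nat) (a xi' : nat -> R) (b : bool).
Hypothesis a1_min : forall i, (1 <= i <= n)%N -> a 1%N <= a i.

Local Notation sg := ((-1) ^+ b : R).
Local Notation t := (tcoord n a xi').

Lemma continuous_tcoord u : u ^+ 2 < a 1%N -> {for u, continuous t}.
Proof.
move=> u2_lt; apply: differentiable_continuous; apply/derivable1_diffP.
by case: (is_derive_tcoord xi' a1_min u2_lt).
Qed.

Lemma continuous_tcoord_itv u v : 0 <= u -> v ^+ 2 < a 1%N ->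
  {in `[u, v]%classic, continuous t}.
Proof.
move=> u_ge0 v2_lt x; rewrite inE /= in_itv /= => /andP[ux xv]; apply: continuous_tcoord.
by apply: le_lt_trans v2_lt; nra.
Qed.

Hypothesis mu_sg_gt0 : forall u, 0 < u -> u ^+ 2 < a 1%N -> 0 < sg * mu n a xi' u.

Lemma tcoord_sg_lt u v : 0 <= u -> u < v -> v ^+ 2 < a 1%N -> sg * t u < sg * t v.
Proof.
move=> u_ge0 uv v2_lt; have v_gt0 := le_lt_trans u_ge0 uv.
have sq_lt x : x \in `]u, v[ -> 0 < x /\ x ^+ 2 < a 1%N.
  rewrite in_itv /= => /andP[ux xv]; have x_gt0 := le_lt_trans u_ge0 ux.
  by split=> //; apply: lt_trans v2_lt; nra.
have [c /sq_lt[c_gt0 c2_lt] E] : exists2 c, c \in `]u, v[ & t v - t u = mu n a xi' c * (v - u).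
  apply: MVT => // [x /sq_lt[_ x2_lt]|]; first exact: is_derive_tcoord.
  by apply: continuous_in_subspaceT; exact: continuous_tcoord_itv u_ge0 v2_lt.
by rewrite -subr_gt0 -mulrBr E mulrA mulr_gt0 ?mu_sg_gt0 // subr_gt0.
Qed.

Lemma tcoord_sg_gt0 u : 0 < u -> u ^+ 2 < a 1%N -> 0 < sg * t u.
Proof. by move=> u_gt0 u2_lt; have := tcoord_sg_lt (lexx 0) u_gt0 u2_lt; rewrite tcoord0 mulr0. Qed.

Lemma tcoord_inj u v : 0 < u -> 0 < v -> u ^+ 2 < a 1%N -> v ^+ 2 < a 1%N ->
  t u = t v -> u = v.
Proof.
move=> u_gt0 v_gt0 u2_lt v2_lt tuv; case: (ltgtP u v) => // [uv|vu].
  by have := tcoord_sg_lt (ltW u_gt0) uv v2_lt; rewrite tuv ltxx.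
by have := tcoord_sg_lt (ltW v_gt0) vu u2_lt; rewrite tuv ltxx.
Qed.

Definition tcoord_inv (s : R) : R :=
  xget 0 [set u | [/\ 0 < u, u ^+ 2 < a 1%N & t u = s]].

Lemma tcoord_invK u : 0 < u -> u ^+ 2 < a 1%N -> tcoord_inv (t u) = u.
Proof.
move=> u_gt0 u2_lt; apply: xget_unique => [|v [v_gt0 v2_lt tvu]]; first by [].
exact: tcoord_inj tvu.
Qed.

Hypothesis tcoord_unbounded :
  forall M, 0 < M -> exists u, [/\ 0 < u, u ^+ 2 < a 1%N & M < sg * t u].

Lemma tcoord_invP s : 0 < sg * s ->
  [/\ 0 < tcoord_inv s, tcoord_inv s ^+ 2 < a 1%N & t (tcoord_inv s) = s].
Proof.
move=> s_gt0; apply: (@xgetPex _ 0 [set u | [/\ 0 < u, u ^+ 2 < a 1%N & t u = s]]).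
have [v [v_gt0 v2_lt sv]] := tcoord_unbounded s_gt0.
have [c] : exists2 c, c \in `[0, v] & sg * t c = sg * s.
  apply: IVT; first exact: ltW.
    apply: continuous_in_subspaceT => x /(continuous_tcoord_itv (lexx 0) v2_lt) t_cont.
    by apply: cvgM; [exact: cvg_cst | exact: t_cont].
  by rewrite tcoord0 mulr0 ge_min le_max (ltW s_gt0) (ltW sv) orbT.
have sg_neq0 : sg != 0 by rewrite signr_eq0.
rewrite in_itv /= => /andP[c_ge0 cv] /(mulfI sg_neq0) tc.
have c_gt0 : 0 < c.
  by rewrite lt_def c_ge0 andbT; apply: contraTneq s_gt0 => c0; rewrite -tc c0 tcoord0 mulr0 ltxx.
exists c; split=> //; apply: le_lt_trans v2_lt.
nra.
Qed.

End TCoordinateDiffeo.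

Lemma is_derive_dir {R : realType} (f : R -> R) (x l v : R) :
  is_derive x 1 f l -> is_derive x v f (v * l).
Proof.
move=> f_der; have f_diff : differentiable f x by apply/derivable1_diffP; case: f_der.
split; first exact: diff_derivable.
rewrite (deriveE v f_diff).
have -> : 'd f x v = v *: 'd f x 1 by rewrite -linearZ /GRing.scale /= mulr1.
by rewrite -deriveE // derive_val.
Qed.

Section GloballyDefined.
Context {R : realType} (n : nat) (a xi' : nat -> R) (b : bool).
Hypothesis a1_min : forall i, (1 <= i <= n)%N -> a 1%N <= a i.

Local Notation sg := ((-1) ^+ b : R).
Local Notation mu := (mu n a xi').
Local Notation t := (tcoord n a xi').
Local Notation ti := (tcoord_inv n a xi').
Local Notation eps := (fun _ : nat => -1 : R).

Hypothesis mu_sg_gt0 : forall u, 0 < u -> u ^+ 2 < a 1%N -> 0 < sg * mu u.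
Hypothesis tcoord_unbounded :
  forall M, 0 < M -> exists u, [/\ 0 < u, u ^+ 2 < a 1%N & M < sg * t u].

Let mu_neq0 u : 0 < u -> u ^+ 2 < a 1%N -> mu u != 0.
Proof. by move=> u_gt0 u2_lt; have := mu_sg_gt0 u_gt0 u2_lt; apply: contraTneq => ->; rewrite mulr0 ltxx. Qed.

Let J : set R := [set s | 0 < sg * s].

Let J_half_line : J = [set s | 0 < s] \/ J = [set s | s < 0].
Proof.
rewrite /J; case: b; [right|left]; apply/seteqP; split=> s /=;
  by rewrite ?expr1 ?expr0 ?mulN1r ?mul1r ?oppr_gt0.
Qed.

Let I : set R := [set u | 0 < u < Num.sqrt (a 1%N)].

Let I_sq u : I u <-> 0 < u /\ u ^+ 2 < a 1%N.
Proof.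
split=> [/andP[u_gt0 u_lt]|[u_gt0 u2_lt]]; first by rewrite -ltr_sqrt_sq.
by rewrite /I /= u_gt0 ltr_sqrt_sq.
Qed.

Let open_I : open I.
Proof. by apply: (@open_preimage_oo R R (fun u => u)) => x. Qed.

Let ti_spec s : J s -> [/\ 0 < ti s, ti s ^+ 2 < a 1%N & t (ti s) = s].
Proof. exact: tcoord_invP. Qed.

Lemma is_derive_tcoord_inv s : J s -> is_derive s 1 ti (mu (ti s))^-1.
Proof.
move=> /ti_spec [u_gt0 u2_lt tus].
have I_near : \forall y \near ti s, I y.
  by apply: open_nbhs_nbhs; split; [exact: open_I | apply/I_sq].
rewrite -[in is_derive s]tus; apply: is_derive_inverse.
- by apply: filterS I_near => y /I_sq[y_gt0 y2_lt]; exact: (tcoord_invK a1_min mu_sg_gt0).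
- by apply: filterS I_near => y /I_sq[_ y2_lt]; exact: continuous_tcoord.
- exact: is_derive_tcoord.
- exact: mu_neq0.
Qed.

Lemma smooth_tcoord_inv : smooth_on J ti.
Proof.
have J_open : open J by case: J_half_line => ->; [exact: open_gt | exact: open_lt].
have ti_range s : J s -> ti s ^+ 2 < a 1%N.
  by case/ti_spec.
apply: (@radical_smooth _ _ J (eq^~ ti)) => // [f -> s Js|f -> v|]; last exact: RadAtom.
- have ti_der := is_derive_tcoord_inv Js.
  split=> [|v]; last by case: (is_derive_dir v ti_der).
  by apply: differentiable_continuous; apply/derivable1_diffP; case: ti_der.
- exists (fun s => v * (mu (ti s))^-1) => [|s Js].
    apply: RadM; first exact: RadCst.
    apply: RadV; first exact: rad_mu (RadAtom _ _) ti_range.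
    by move=> s /ti_spec[ti_gt0 ti2_lt _]; exact: mu_neq0.
  by case: (is_derive_dir v (is_derive_tcoord_inv Js)).
Qed.

Lemma smooth_tcoord : smooth_on I t.
Proof.
apply: continuous_linear_smooth => //.
apply: (rad_tcoord xi' a1_min (RadAtom _ continuous_linear_id)).
by move=> u /I_sq[].
Qed.

Local Notation M := (Mset a).
Local Notation g_uu := (g_uu n a eps 1 xi').

Let M_sq p : M p -> 0 < p.1 /\ p.1 ^+ 2 < a 1%N.
Proof. exact: (I_sq p.1).1. Qed.

Let smooth_M f : radical_expr M continuous_linear f -> smooth_on M f.
Proof.
apply: continuous_linear_smooth.
by apply: (@open_preimage_oo R (R * R)%type (fun p => p.1)) => p; exact: cvg_fst.
Qed.

Let rad_p1 : radical_expr M continuous_linear (fun p : R * R => p.1).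
Proof. exact: RadAtom (continuous_linear_fst continuous_linear_id). Qed.

Let p1_neq0 p : M p -> p.1 != 0.
Proof. by case/M_sq => p1_gt0 _; rewrite gt_eqF. Qed.

Lemma g_uu_eq p : M p -> g_uu p = (mu p.1 / p.1) ^+ 2.
Proof.
move=> Mp; have [_ p2_lt] := M_sq Mp.
by rewrite /Defs.g_uu (xdot_sq xi' a1_min p2_lt); field; rewrite p1_neq0.
Qed.

Lemma riemannian_g :
  [/\ smooth_on M g_uu, smooth_on M (@g_uy R), smooth_on M (@g_yy R)
    & forall p, M p -> 0 < g_uu p /\ 0 < g_uu p * g_yy p - g_uy p ^+ 2].
Proof.
split.
- apply: smooth_M; apply: RadM; last by apply: rad_exp; apply: RadM => //; exact: RadCst.
  apply: rad_div; [apply: rad_exp | do 2 apply: rad_exp => // |].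
    by apply: (rad_xdot xi' a1_min rad_p1) => p /M_sq[].
  by move=> p /p1_neq0 p_neq0; rewrite !expf_neq0.
- by apply: smooth_M; exact: RadCst.
- by apply: smooth_M; apply: RadV; [exact: rad_exp | move=> p /p1_neq0; exact: expf_neq0].
move=> p Mp; have [p1_gt0 p2_lt] := M_sq Mp.
have g_uu_gt0 : 0 < g_uu p.
  by rewrite g_uu_eq // exprn_even_gt0 // mulf_neq0 ?invr_eq0 ?p1_neq0 ?mu_neq0.
by split=> //; rewrite /g_uy /g_yy expr0n subr0 mulr_gt0 // invr_gt0 exprn_gt0.
Qed.

Let t_neq0 u : 0 < u -> u ^+ 2 < a 1%N -> t u != 0.
Proof.
move=> u_gt0 u2_lt; have := tcoord_sg_gt0 a1_min mu_sg_gt0 u_gt0 u2_lt.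
by apply: contraTneq => ->; rewrite mulr0 ltxx.
Qed.

Definition conformal_factor (p : R * R) : R := t p.1 ^+ 2 / p.1 ^+ 2.

Lemma conformal_factor_gt0 p : M p -> 0 < conformal_factor p.
Proof.
move=> Mp; have [p1_gt0 p2_lt] := M_sq Mp.
by rewrite divr_gt0 ?exprn_even_gt0 ?t_neq0 ?p1_neq0.
Qed.

Lemma smooth_conformal_factor : smooth_on M conformal_factor.
Proof.
apply: smooth_M; apply: rad_div; [apply: rad_exp | exact: rad_exp |].
  by apply: (rad_tcoord xi' a1_min rad_p1) => p /M_sq[].
by move=> p /p1_neq0; exact: expf_neq0.
Qed.

Lemma conformal_g p : M p ->
  [/\ g_uu p = conformal_factor p * (derive1 t p.1) ^+ 2 / (t p.1) ^+ 2,
      g_uy p = conformal_factor p * 0 / (t p.1) ^+ 2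
    & g_yy p = conformal_factor p * 1 / (t p.1) ^+ 2].
Proof.
move=> Mp; have [p1_gt0 p2_lt] := M_sq Mp.
have t_der := is_derive_tcoord xi' a1_min p2_lt.
have := t_neq0 p1_gt0 p2_lt; have := p1_neq0 Mp.
rewrite g_uu_eq // derive1E derive_val /conformal_factor /g_uy /g_yy.
by move=> p_neq0 tp_neq0; split; field; rewrite ?p_neq0 ?tp_neq0.
Qed.

Theorem globally_defined_of_sign : globally_defined n a eps 1 xi'.
Proof.
have [g_uu_smooth g_uy_smooth g_yy_smooth g_pos] := riemannian_g.
split=> //; split; last first.
  split; apply: continuous_linear_smooth (@open_TMset _ a) _.
    exact: rad_S1 a1_min mu_neq0.
  exact: rad_S2 a1_min mu_neq0.
exists J, t, ti, conformal_factor.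
split; first exact: J_half_line.
split; first exact: smooth_tcoord.
split; first exact: smooth_tcoord_inv.
split.
  move=> u /I_sq[u_gt0 u2_lt]; split; first exact: (tcoord_sg_gt0 a1_min mu_sg_gt0).
  exact: (tcoord_invK a1_min mu_sg_gt0).
split; first by move=> s /ti_spec[ti_gt0 ti2_lt tis]; split=> //; apply/I_sq.
split; first exact: smooth_conformal_factor.
split; first exact: conformal_factor_gt0.
by move=> p /conformal_g[].
Qed.

End GloballyDefined.

Lemma first_term_unbounded {R : realType} (c M : R) : 0 < c -> 0 < M ->
  exists u, [/\ 0 < u, u ^+ 2 < c & M < u / (c * Num.sqrt (c - u ^+ 2))].
Proof.
move=> c_gt0 M_gt0.
pose r := Num.sqrt (c / 2).
have r_gt0 : 0 < r by rewrite sqrtr_gt0 divr_gt0.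
have r2 : r ^+ 2 = c / 2 by rewrite sqr_sqrtr // ltW // divr_gt0.
have cM_gt0 : 0 < 2 * c * M by rewrite !mulr_gt0.
(* The witness u := sqrt (c - q^2) stays >= r while c - u^2 = q^2 is small. *)
pose q := Num.min r (r / (2 * c * M)).
have q_gt0 : 0 < q by rewrite lt_min r_gt0 divr_gt0.
have q_le : q * (2 * c * M) <= r by rewrite -ler_pdivlMr // ge_min lexx orbT.
have q2_le : q ^+ 2 <= c / 2.
  by rewrite -r2; apply: lerXn2r; rewrite ?nnegrE ?ge_min ?lexx // ltW.
pose u := Num.sqrt (c - q ^+ 2).
have u2 : u ^+ 2 = c - q ^+ 2 by rewrite sqr_sqrtr //; lra.
have r_le_u : r <= u by rewrite ler_sqrt; lra.
exists u; split; first by rewrite sqrtr_gt0; lra.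
  by rewrite u2; have := exprn_gt0 2 q_gt0; lra.
rewrite u2 opprB addrC subrK sqrtr_sqr gtr0_norm // ltr_pdivlMr ?mulr_gt0 //.
nra.
Qed.

Lemma pow32V_le {R : realType} (x y : R) : 0 < x -> x <= y -> (pow32 y)^-1 <= (pow32 x)^-1.
Proof.
move=> x_gt0 xy; have y_gt0 := lt_le_trans x_gt0 xy.
rewrite lef_pV2 ?posrE /pow32 ?mulr_gt0 ?sqrtr_gt0 //.
by apply: ler_pM; rewrite ?sqrtr_ge0 ?ler_sqrt // ltW.
Qed.

Section SignedCoefficients.
Context {R : realType} (n : nat) (a xi xi' : nat -> R) (b : bool).

Local Notation sg := ((-1) ^+ b : R).

Hypothesis n_gt0 : (0 < n)%N.
Hypothesis a1_gt0 : 0 < a 1%N.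
Hypothesis a1_lt1 : a 1%N < 1.
Hypothesis a1_min : forall i, (1 <= i <= n)%N -> a 1%N <= a i.
Hypothesis xi_ge0 : forall i, (2 <= i <= n)%N -> 0 <= xi i.
Hypothesis sg_xi'1 : sg * xi' 1%N = 1.
Hypothesis sg_xi' : forall i, (2 <= i <= n)%N -> sg * xi' i = xi i.
Hypothesis threshold :
  0 < sg + (pow32 `|a 1%N|)^-1 + \sum_(2 <= i < n.+1) xi i / pow32 `|a i|.

Let mem_index_iota2 i : i \in index_iota 2 n.+1 -> (2 <= i <= n)%N.
Proof. by rewrite mem_index_iota ltnS. Qed.

Let a_gt0 i : (1 <= i <= n)%N -> 0 < a i.
Proof. by move=> Hi; apply: lt_le_trans a1_gt0 (a1_min Hi). Qed.

Let i2_1n i : (2 <= i <= n)%N -> (1 <= i <= n)%N.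
Proof. by case/andP=> i_ge2 ->; rewrite (leq_trans _ i_ge2). Qed.


Let sg_sum (F : nat -> R) :
  sg * \sum_(1 <= i < n.+1) xi' i * F i = F 1%N + \sum_(2 <= i < n.+1) xi i * F i.
Proof.
rewrite big_ltn ?ltnS // mulrDr mulrA sg_xi'1 mul1r mulr_sumr; congr (_ + _).
by rewrite !big_seq; apply: eq_bigr => i /mem_index_iota2 Hi; rewrite mulrA sg_xi'.
Qed.

Lemma sg_mu_gt0 u : 0 < u -> u ^+ 2 < a 1%N -> 0 < sg * mu n a xi' u.
Proof.
move=> u_gt0 u2_lt; apply: lt_le_trans threshold _.
rewrite /mu mulrDr mulr1 (sg_sum (fun i => (pow32 (gap a i u))^-1)) -!addrA lerD2l.
apply: lerD.
  apply: pow32V_le; first exact: (@gap_gt0 _ _ _ a1_min 1 u n_gt0 u2_lt).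
  by rewrite gtr0_norm // gerDl oppr_le0 sqr_ge0.
rewrite !big_seq; apply: ler_sum => i /mem_index_iota2 Hi.
apply: ler_wpM2l; first exact: xi_ge0.
apply: pow32V_le; first exact: (@gap_gt0 _ _ _ a1_min i u (i2_1n Hi) u2_lt).
by rewrite gtr0_norm ?a_gt0 ?i2_1n // gerDl oppr_le0 sqr_ge0.
Qed.

Lemma sg_tcoord_unbounded M : 0 < M ->
  exists u, [/\ 0 < u, u ^+ 2 < a 1%N & M < sg * tcoord n a xi' u].
Proof.
move=> M_gt0; have [|u [u_gt0 u2_lt Mu]] := first_term_unbounded a1_gt0 (M := M + 1).
  by rewrite addr_gt0.
exists u; split=> //.
have u_lt1 : u < 1 by rewrite -sqrtr1 ltr_sqrt_sq // (lt_trans u2_lt).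
have /andP[sgu _] : -u <= sg * u <= u by rewrite -ler_norml normrM normr_sign mul1r gtr0_norm.
have S_ge0 : 0 <= \sum_(2 <= i < n.+1) xi i * (u / (a i * Num.sqrt (gap a i u))).
  rewrite big_seq; apply: sumr_ge0 => i /mem_index_iota2 Hi.
  rewrite mulr_ge0 ?xi_ge0 // divr_ge0 ?(ltW u_gt0) // mulr_ge0 ?sqrtr_ge0 //.
  exact/ltW/a_gt0/i2_1n.
rewrite /tcoord mulrDr (sg_sum (fun i => u / (a i * Num.sqrt (gap a i u)))).
rewrite /gap in Mu S_ge0 *; lra.
Qed.

Theorem globally_defined_signed : globally_defined n a (fun=> -1) 1 xi'.
Proof. exact: globally_defined_of_sign a1_min sg_mu_gt0 sg_tcoord_unbounded. Qed.

End SignedCoefficients.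

Theorem proposition29 (R : realType) (n : nat) (a : nat -> R) (xi : nat -> R) :
  (2 <= n)%N ->
  (forall i j, (1 <= i <= n)%N -> (1 <= j <= n)%N -> i <> j -> a i <> a j) ->
  0 < a 1%N < 1 ->
  (forall i, (2 <= i <= n)%N -> 1 < a i) ->
  (forall i, (2 <= i <= n)%N -> 0 < xi i) ->
  (* I_{-+} *)
  (1 < (pow32 `|a 1%N|)^-1 + \sum_(2 <= i < n.+1) xi i / pow32 `|a i| ->
     globally_defined n a (fun _ => -1) 1 (xi_mp xi))
  /\
  (* I_{--} *)
  globally_defined n a (fun _ => -1) 1 (xi_mm xi).
Proof.
(* The a_i need not be distinct. *)
move=> n_ge2 _ /andP[a1_gt0 a1_lt1] a_gt1 xi_gt0.
have n_gt0 : (0 < n)%N by apply: leq_trans n_ge2.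
have a1_min i : (1 <= i <= n)%N -> a 1%N <= a i.
  rewrite leq_eqVlt => /andP[/orP[/eqP <- //|i_ge2 i_le_n]].
  by apply/ltW/(lt_trans a1_lt1)/a_gt1; rewrite i_ge2.
have xi_ge0 i : (2 <= i <= n)%N -> 0 <= xi i by move/xi_gt0/ltW.
have i_neq1 i : (2 <= i <= n)%N -> (i == 1%N) = false by case: i => [|[]].
have S_ge0 : 0 <= (pow32 `|a 1%N|)^-1 + \sum_(2 <= i < n.+1) xi i / pow32 `|a i|.
  rewrite addr_ge0 ?invr_ge0 ?mulr_ge0 ?sqrtr_ge0 // big_seq sumr_ge0 // => i.
  by rewrite mem_index_iota ltnS => Hi; rewrite divr_ge0 ?xi_ge0 ?mulr_ge0 ?sqrtr_ge0.
split=> [threshold|]; [apply: (@globally_defined_signed _ _ _ xi _ true)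
                      | apply: (@globally_defined_signed _ _ _ xi _ false)] => //.
- by rewrite /xi_mp eqxx mulN1r opprK.
- by move=> i Hi; rewrite /xi_mp i_neq1 // mulN1r opprK.
- by rewrite expr1 -addrA addrC subr_gt0.
- by rewrite /xi_mm eqxx mulr1.
- by move=> i Hi; rewrite /xi_mm i_neq1 // mul1r.
- by move: S_ge0; rewrite expr0 -addrA; lra.
Qed.
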